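(* Let $l\ge 3$, $\mathfrak g=\mathfrak{sl}_{l+1}(\mathbb C)$, $v'_{l,1}=e_{\epsilon_1-\epsilon_{l+1}}e_{\epsilon_2-\epsilon_l}-e_{\epsilon_2-\epsilon_{l+1}}e_{\epsilon_1-\epsilon_l}\in U(\mathfrak g)$, $R$ the adjoint $\mathfrak g$-submodule of $U(\mathfrak g)$ generated by $v'_{l,1}$, $R_0$ its zero-weight subspace, and $\mathcal P_0=\{p_r : r\in R_0\}$. Define polynomials in $h_1,\dots,h_l$: (1) $p_{ij}(h)=h_ih_j$ for $i=1,\dots,l-2$ and $j$ with $j-i\ge 2$ (and $j\le l$); (2) $q_i(h)=h_i(h_{i-1}+h_i+h_{i+1}+1)$ for $i=2,\dots,l-1$. Then all $p_{ij}$ and $q_i$ belong to $\mathcal P_0$.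
   Context: $\mathfrak g=\mathfrak{sl}_{l+1}(\mathbb C)$ with Cartan subalgebra $\mathfrak h$ of traceless diagonal matrices, triangular decomposition $\mathfrak g=\mathfrak n_-\oplus\mathfrak h\oplus\mathfrak n_+$ ($\mathfrak n_+$ strictly upper triangular), simple roots $\alpha_i=\epsilon_i-\epsilon_{i+1}$. For $i<j$: $e_{\epsilon_i-\epsilon_j}=(-1)^{j-i-1}E_{ij}$, $f_{\epsilon_i-\epsilon_j}=(-1)^{j-i-1}E_{ji}$, $h_{\epsilon_i-\epsilon_j}=E_{ii}-E_{jj}$, $h_i=h_{\alpha_i}$. The adjoint action is $X_L f=[X,f]$. For $r\in R_0$, $p_r$ denotes the unique element of $S(\mathfrak h)=\mathbb C[h_1,\dots,h_l]$ with $r-p_r\in U(\mathfrak g)\mathfrak n_+$; equivalently $r v_\mu=p_r(\mu)v_\mu$ for every highest weight vector $v_\mu$ of weight $\mu\in\mathfrak h^*$ (polynomials are evaluated at $\mu$ via $h_i\mapsto\mu(h_i)$). *)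

(* U(sl_{l+1}(C)) presented by generators and relations;
   C is modelled as R[i] for R : realType (complete archimedean field = reals). *)
From HB Require Import structures.
From mathcomp Require Import all_boot all_order all_algebra.
From mathcomp Require Import complex.
From mathcomp Require Import reals.

Set Implicit Arguments.
Unset Strict Implicit.
Unset Printing Implicit Defensive.
Import Order.TTheory GRing.Theory Num.Theory.
Local Open Scope ring_scope.

Section UEnv.
Variables (R : realType) (l : nat).

(* n = l + 1; indices of matrices are 0-based: paper's index k is inord (k-1). *)
Local Notation C := R[i].
Local Notation n := l.+1.

Definition sl := {X : 'M[C]_n | \tr X == 0}.

Lemma tr_zero_mx : \tr (0 : 'M[C]_n) == 0.
Proof. by rewrite mxtrace0. Qed.

Definition sl0 : sl := exist _ 0 tr_zero_mx.

Definition lbr (X Y : 'M[C]_n) : 'M[C]_n := X *m Y - Y *m X.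

Definition in_cartan (X : sl) : Prop := forall i j : 'I_n, i != j -> val X i j = 0.
Definition in_nplus (X : sl) : Prop := forall i j : 'I_n, (j <= i)%N -> val X i j = 0.

(* Terms of the tensor algebra T(g) over C *)
Inductive uterm : Type :=
| Ugen of sl
| Uscal of C
| Uadd of uterm & uterm
| Umul of uterm & uterm.

Definition Uopp (u : uterm) := Umul (Uscal (-1)) u.
Definition Usub (u v : uterm) := Uadd u (Uopp v).

(* equality in U(g) = T(g) / (X Y - Y X - [X,Y]) : the congruence generated by
   the axioms of an associative unital C-algebra, linearity of the generator
   map g -> U(g), and the commutator relations. *)
Inductive ueq : uterm -> uterm -> Prop :=
| ueq_refl u : ueq u u
| ueq_sym u v : ueq u v -> ueq v u
| ueq_trans u v w : ueq u v -> ueq v w -> ueq u w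
| ueq_add u u' v v' : ueq u u' -> ueq v v' -> ueq (Uadd u v) (Uadd u' v')
| ueq_mul u u' v v' : ueq u u' -> ueq v v' -> ueq (Umul u v) (Umul u' v')
| ueq_addA u v w : ueq (Uadd u (Uadd v w)) (Uadd (Uadd u v) w)
| ueq_addC u v : ueq (Uadd u v) (Uadd v u)
| ueq_add0 u : ueq (Uadd u (Uscal 0)) u
| ueq_addN u : ueq (Uadd u (Uopp u)) (Uscal 0)
| ueq_mulA u v w : ueq (Umul u (Umul v w)) (Umul (Umul u v) w)
| ueq_mul1l u : ueq (Umul (Uscal 1) u) u
| ueq_mul1r u : ueq (Umul u (Uscal 1)) u
| ueq_mulDl u v w : ueq (Umul (Uadd u v) w) (Uadd (Umul u w) (Umul v w))
| ueq_mulDr u v w : ueq (Umul u (Uadd v w)) (Uadd (Umul u v) (Umul u w))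
| ueq_scalD a b : ueq (Uadd (Uscal a) (Uscal b)) (Uscal (a + b))
| ueq_scalM a b : ueq (Umul (Uscal a) (Uscal b)) (Uscal (a * b))
| ueq_scalC a u : ueq (Umul (Uscal a) u) (Umul u (Uscal a))
| ueq_genL a b (X Y Z : sl) : val Z = a *: val X + b *: val Y ->
    ueq (Ugen Z) (Uadd (Umul (Uscal a) (Ugen X)) (Umul (Uscal b) (Ugen Y)))
| ueq_genBr (X Y Z : sl) : val Z = lbr (val X) (val Y) ->
    ueq (Usub (Umul (Ugen X) (Ugen Y)) (Umul (Ugen Y) (Ugen X))) (Ugen Z).

Definition uad (X : sl) (u : uterm) : uterm := Usub (Umul (Ugen X) u) (Umul u (Ugen X)).

Inductive in_adj_submod (v : uterm) : uterm -> Prop :=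
| sm_gen : in_adj_submod v v
| sm_add u w : in_adj_submod v u -> in_adj_submod v w -> in_adj_submod v (Uadd u w)
| sm_scale c u : in_adj_submod v u -> in_adj_submod v (Umul (Uscal c) u)
| sm_ad X u : in_adj_submod v u -> in_adj_submod v (uad X u)
| sm_eq u w : in_adj_submod v u -> ueq u w -> in_adj_submod v w.

Definition zero_weight (u : uterm) : Prop :=
  forall H : sl, in_cartan H -> ueq (uad H u) (Uscal 0).

Inductive in_Unplus : uterm -> Prop :=
| un_mul u (X : sl) : in_nplus X -> in_Unplus (Umul u (Ugen X))
| un_add u w : in_Unplus u -> in_Unplus w -> in_Unplus (Uadd u w)
| un_eq u w : in_Unplus u -> ueq u w -> in_Unplus w.

(* matrix units with the paper's 1-based indices *)
Definition Emx (i j : nat) : 'M[C]_n := delta_mx (inord i.-1) (inord j.-1).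

Definition e_root (i j : nat) : sl := insubd sl0 ((-1) ^+ (j - i - 1) *: Emx i j).
Definition h_cartan (i : nat) : sl := insubd sl0 (Emx i i - Emx i.+1 i.+1).

Definition ue (i j : nat) : uterm := Ugen (e_root i j).
Definition uh (i : nat) : uterm := Ugen (h_cartan i).

Definition v_l1 : uterm :=
  Usub (Umul (ue 1 l.+1) (ue 2 l)) (Umul (ue 2 l.+1) (ue 1 l)).

(* p is in P_0 (p an element of S(h) = C[h_1..h_l] viewed inside U(g)):
   there is r in R_0 with p_r = p, i.e. r - p in U(g) n_+ *)
Definition in_P0 (p : uterm) : Prop :=
  exists r, [/\ in_adj_submod v_l1 r, zero_weight r & in_Unplus (Usub r p)].

Definition p_ij (i j : nat) : uterm := Umul (uh i) (uh j).
Definition q_i (i : nat) : uterm :=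
  Umul (uh i) (Uadd (Uadd (Uadd (uh i.-1) (uh i)) (uh i.+1)) (Uscal 1)).

End UEnv.

From HB Require Import structures.
From mathcomp Require Import all_boot all_order all_algebra.
From mathcomp Require Import complex reals.
From mathcomp Require Import boolp ring zify.
Set Implicit Arguments.
Unset Strict Implicit.
Unset Printing Implicit Defensive.
Import Order.TTheory GRing.Theory Num.Theory.
Local Open Scope ring_scope.

(* In U(g), v'_{l,1} is the 2x2 minor M(1,2,l+1,l) of matrix units, where
     M(a,b,c,d) = E_ac E_bd - E_ad E_bc
   (the signs of the root vectors cancel).  For a fresh index p,
   [E_pa, M(a,b,c,d)] = M(p,b,c,d); the minor is antisymmetric in (a,b) and in
   (c,d); and [E_da,[E_da, M(a,b,c,d)]] = -2 M(d,b,c,a).  Hence R contains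
   M(a,b,c,d) for every quadruple of distinct indices.  The element
   [E_ca,[E_db, M(a,b,c,d)]] of R has weight zero and equals
     (E_cc - E_aa)(E_dd - E_bb) + E_cb E_bc - E_ab E_ba - E_cd E_dc + E_ad E_da.
   Modulo U(g) n_+ this is h_j h_i for (a,b,c,d) = (j+1,i+1,j,i), and, after
   commuting E_cb E_bc and E_cd E_dc, it is q_i for (a,b,c,d) = (i+2,i+1,i-1,i). *)

Lemma mxtrace_delta (K : pzSemiRingType) m (a b : 'I_m) :
  \tr (delta_mx a b : 'M[K]_m) = (a == b)%:R.
Proof.
rewrite /mxtrace (bigD1 a) //= big1 ?addr0 ?mxE ?eqxx //.
by move=> k /negbTE k_neq_a; rewrite mxE k_neq_a.
Qed.

Section PropQuotient.
Variables (T : Type) (e : T -> T -> Prop).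
Hypotheses (e_refl : forall x, e x x) (e_sym : forall x y, e x y -> e y x)
  (e_trans : forall x y z, e x y -> e y z -> e x z).

Definition pquot := {P : T -> Prop | exists x, P = e x}.
Definition pcls (x : T) : pquot := exist _ (e x) (ex_intro _ x erefl).
Definition prepr (q : pquot) : T := sval (cid (svalP q)).

Lemma pclsP x y : pcls x = pcls y <-> e x y.
Proof.
split=> [/(congr1 sval) /= exy | exy]; first by rewrite exy; apply: e_refl.
have eyx : e y = e x.
  by apply/funext => z; apply/propext; split; [apply: e_trans | apply: e_trans (e_sym exy)].
rewrite /pcls; move: (ex_intro _ y _); rewrite eyx => py.
by congr exist; apply: Prop_irrelevance.
Qed.

Lemma preprK : cancel prepr pcls.
Proof.
case=> P hP; rewrite /prepr; case: cid => x /= ePx.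
by rewrite /pcls; move: hP; rewrite ePx => hP; congr exist; apply: Prop_irrelevance.
Qed.

Lemma pquot_ind (P : pquot -> Prop) : (forall x, P (pcls x)) -> forall q, P q.
Proof. by move=> hP q; rewrite -(preprK q). Qed.

End PropQuotient.

Section Commutator.
Variables (K : comNzRingType) (A : algType K).
Implicit Types (h x y z : A) (a b : K).

(* Locked, so that matching a rewrite rule against [ad h x] never unfolds a
   nested commutator in [x]. *)
Fact ad_key : unit. Proof. by []. Qed.
Definition ad := locked_with ad_key (fun x y : A => x * y - y * x).
Lemma adE x y : ad x y = x * y - y * x. Proof. by rewrite /ad unlock. Qed.

Lemma ad_is_linear x : linear (ad x).
Proof.
by move=> a y z; rewrite !adE mulrDr mulrDl -scalerAr -scalerAl opprD addrACA -scalerBr.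
Qed.
HB.instance Definition _ x := GRing.isLinear.Build K A A *:%R (ad x) (ad_is_linear x).

Lemma ad0 h : ad h 0 = 0. Proof. exact: linear0. Qed.
Lemma adD h x y : ad h (x + y) = ad h x + ad h y. Proof. exact: linearD. Qed.
Lemma adN h x : ad h (- x) = - ad h x. Proof. exact: linearN. Qed.
Lemma adB h x y : ad h (x - y) = ad h x - ad h y. Proof. exact: linearB. Qed.
Lemma adZ h a x : ad h (a *: x) = a *: ad h x. Proof. exact: linearZ. Qed.

Lemma adBl x y z : ad (x - y) z = ad x z - ad y z.
Proof. by rewrite !adE mulrBl mulrBr opprD opprK addrACA opprB [_ - y * z]addrC. Qed.

Lemma adM h x y : ad h (x * y) = ad h x * y + x * ad h y.
Proof. by rewrite !adE mulrBl mulrBr !mulrA addrA subrK. Qed.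

Lemma ad_ad h x y : ad h (ad x y) = ad (ad h x) y + ad x (ad h y).
Proof.
rewrite [ad x y]adE adB !adM; set hx := ad h x; set hy := ad h y.
by rewrite !adE opprD (addrC (- (hy * x))) addrACA.
Qed.

Lemma ad_eq0 x y : ad x y = 0 -> GRing.comm x y.
Proof. by rewrite adE => /eqP; rewrite subr_eq0 => /eqP. Qed.

Lemma ad_eigenM h x y a b : ad h x = a *: x -> ad h y = b *: y ->
  ad h (x * y) = (a + b) *: (x * y).
Proof. by move=> hx hy; rewrite adM hx hy scalerDl -scalerAl -scalerAr. Qed.

Lemma ad_eigen_ad h x y a b : ad h x = a *: x -> ad h y = b *: y ->
  ad h (ad x y) = (a + b) *: ad x y.
Proof. by move=> hx hy; rewrite ad_ad hx hy adZ !adE -scalerAl -scalerAr -scalerBr scalerDl. Qed.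

End Commutator.

Section EnvelopingAlgebra.
Variables (R : realType) (l : nat).
Local Notation C := R[i].
Local Notation n := l.+1.
Local Notation U := (uterm R l).

Definition Ug := pquot (@ueq R l).
Local Notation cls := (pcls (@ueq R l) : U -> Ug).
Local Notation repr := (prepr (e := @ueq R l)).

Lemma clsP (u v : U) : cls u = cls v <-> ueq u v.
Proof. exact: (pclsP (@ueq_refl R l) (@ueq_sym R l) (@ueq_trans R l)). Qed.

Lemma ueq_repr (u : U) : ueq (repr (cls u)) u.
Proof. by apply/clsP; rewrite preprK. Qed.

HB.instance Definition _ := gen_eqMixin Ug.
HB.instance Definition _ := gen_choiceMixin Ug.

Definition addU (p q : Ug) := cls (Uadd (repr p) (repr q)).
Definition mulU (p q : Ug) := cls (Umul (repr p) (repr q)).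
Definition oppU (p : Ug) := cls (Uopp (repr p)).

Lemma addUE u v : addU (cls u) (cls v) = cls (Uadd u v).
Proof. by apply/clsP; apply: ueq_add; apply: ueq_repr. Qed.
Lemma mulUE u v : mulU (cls u) (cls v) = cls (Umul u v).
Proof. by apply/clsP; apply: ueq_mul; apply: ueq_repr. Qed.
Lemma oppUE u : oppU (cls u) = cls (Uopp u).
Proof. by apply/clsP; apply: ueq_mul; [apply: ueq_refl | apply: ueq_repr]. Qed.

Lemma addUA : associative addU.
Proof.
by do 3!elim/pquot_ind=> ?; rewrite !addUE; apply/clsP/ueq_addA.
Qed.
Lemma addUC : commutative addU.
Proof. by do 2!elim/pquot_ind=> ?; rewrite !addUE; apply/clsP/ueq_addC. Qed.

Definition uscal (c : C) : Ug := cls (Uscal l c).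

Lemma add0U : left_id (uscal 0) addU.
Proof.
elim/pquot_ind=> u; rewrite addUE; apply/clsP.
exact: ueq_trans (ueq_addC _ _) (ueq_add0 _).
Qed.

Lemma addNU : left_inverse (uscal 0) oppU addU.
Proof.
elim/pquot_ind=> u; rewrite oppUE addUE; apply/clsP.
exact: ueq_trans (ueq_addC _ _) (ueq_addN _).
Qed.

HB.instance Definition _ := GRing.isZmodule.Build Ug addUA addUC add0U addNU.

Lemma mulUA : associative mulU.
Proof. by do 3!elim/pquot_ind=> ?; rewrite !mulUE; apply/clsP/ueq_mulA. Qed.
Lemma mul1U : left_id (uscal 1) mulU.
Proof. by elim/pquot_ind=> ?; rewrite mulUE; apply/clsP/ueq_mul1l. Qed.
Lemma mulU1 : right_id (uscal 1) mulU.
Proof. by elim/pquot_ind=> ?; rewrite mulUE; apply/clsP/ueq_mul1r. Qed.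
Lemma mulUDl : left_distributive mulU addU.
Proof. by do 3!elim/pquot_ind=> ?; rewrite !(addUE, mulUE); apply/clsP/ueq_mulDl. Qed.
Lemma mulUDr : right_distributive mulU addU.
Proof. by do 3!elim/pquot_ind=> ?; rewrite !(addUE, mulUE); apply/clsP/ueq_mulDr. Qed.

Fixpoint counit (u : U) : C :=
  match u with
  | Ugen _ => 0
  | Uscal c => c
  | Uadd a b => counit a + counit b
  | Umul a b => counit a * counit b
  end.

Lemma counit_ueq (u v : U) : ueq u v -> counit u = counit v.
Proof.
elim=> //=; first [by move=> ? ? ? _ -> _ -> | by move=> ? ? ? ? _ -> _ -> | by move=> *; ring].
Qed.

Lemma uscal1_neq0 : uscal 1 != uscal 0.
Proof. by apply/eqP => /clsP /counit_ueq /eqP; rewrite oner_eq0. Qed.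

HB.instance Definition _ :=
  GRing.Zmodule_isNzRing.Build Ug mulUA mul1U mulU1 mulUDl mulUDr uscal1_neq0.

Lemma clsD u v : cls (Uadd u v) = cls u + cls v. Proof. by rewrite -addUE. Qed.
Lemma clsM u v : cls (Umul u v) = cls u * cls v. Proof. by rewrite -mulUE. Qed.

Lemma uscalD a b : uscal (a + b) = uscal a + uscal b.
Proof. by rewrite -clsD; apply/clsP/ueq_sym/ueq_scalD. Qed.
Lemma uscalM a b : uscal (a * b) = uscal a * uscal b.
Proof. by rewrite -clsM; apply/clsP/ueq_sym/ueq_scalM. Qed.
Lemma uscal_comm c (x : Ug) : GRing.comm (uscal c) x.
Proof. by elim/pquot_ind: x => u; rewrite /GRing.comm -!clsM; apply/clsP/ueq_scalC. Qed.

Definition scaleU (c : C) (x : Ug) := uscal c * x.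

Lemma scaleUA a b x : scaleU a (scaleU b x) = scaleU (a * b) x.
Proof. by rewrite /scaleU uscalM mulrA. Qed.
Lemma scale1U : left_id 1 scaleU.
Proof. exact: mul1r. Qed.
Lemma scaleUDr : right_distributive scaleU +%R.
Proof. by move=> *; rewrite /scaleU mulrDr. Qed.
Lemma scaleUDl x : {morph scaleU^~ x : a b / a + b}.
Proof. by move=> a b; rewrite /scaleU uscalD mulrDl. Qed.

HB.instance Definition _ :=
  GRing.Zmodule_isLmodule.Build C Ug scaleUA scale1U scaleUDr scaleUDl.

Lemma scaleUAl a (x y : Ug) : a *: (x * y) = (a *: x) * y.
Proof. exact: mulrA. Qed.
HB.instance Definition _ := GRing.Lmodule_isLalgebra.Build C Ug scaleUAl.

Lemma scaleUAr a (x y : Ug) : a *: (x * y) = x * (a *: y).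
Proof. by rewrite /GRing.scale /= /scaleU !mulrA uscal_comm. Qed.
HB.instance Definition _ := GRing.Lalgebra_isAlgebra.Build C Ug scaleUAr.

Lemma clsZ c u : cls (Umul (Uscal l c) u) = c *: cls u.
Proof. exact: clsM. Qed.
Lemma clsN u : cls (Uopp u) = - cls u.
Proof. by rewrite clsZ scaleN1r. Qed.
Lemma clsB u v : cls (Usub u v) = cls u - cls v.
Proof. by rewrite clsD clsN. Qed.
Lemma cls0 : cls (Uscal l 0) = 0. Proof. by []. Qed.
Lemma cls1 : cls (Uscal l 1) = 1. Proof. by []. Qed.

Implicit Types (M N : 'M[C]_n) (a b c d p : 'I_n).

Definition traceless M := M - (\tr M / n%:R)%:M.

Lemma mxtrace_traceless M : \tr (traceless M) = 0.
Proof.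
rewrite /traceless linearB /= mxtrace_scalar -(mulr_natr (\tr M / _)) divfK ?subrr //.
by rewrite pnatr_eq0.
Qed.

Lemma traceless_id M : \tr M = 0 -> traceless M = M.
Proof. by move=> trM0; rewrite /traceless trM0 mul0r raddf0 subr0. Qed.

Lemma traceless_is_linear : linear traceless.
Proof.
move=> a M N; rewrite /traceless linearD linearZ /= mulrDl raddfD /= -mulrA.
by rewrite scalerBr scale_scalar_mx opprD addrACA.
Qed.

Definition sl_of M : sl R l := insubd (sl0 R l) (traceless M).

Lemma val_sl_of M : val (sl_of M) = traceless M.
Proof. by rewrite insubdK // unfold_in mxtrace_traceless. Qed.

Fact gen_key : unit. Proof. by []. Qed.
Definition gen := locked_with gen_key (fun M => cls (Ugen (sl_of M))).
Lemma genE M : gen M = cls (Ugen (sl_of M)). Proof. by rewrite /gen unlock. Qed.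

Lemma gen_is_linear : linear gen.
Proof.
move=> a M N; rewrite !genE; apply: (@eq_trans _ _ (cls (Uadd
  (Umul (Uscal l a) (Ugen (sl_of M))) (Umul (Uscal l 1) (Ugen (sl_of N)))))).
  by apply/clsP/ueq_genL; rewrite !val_sl_of traceless_is_linear scale1r.
by rewrite clsD !clsZ scale1r.
Qed.
HB.instance Definition _ := GRing.isLinear.Build C 'M[C]_n Ug *:%R gen gen_is_linear.

Lemma gen0 : gen 0 = 0. Proof. exact: linear0. Qed.
Lemma genN M : gen (- M) = - gen M. Proof. exact: linearN. Qed.
Lemma genB M N : gen (M - N) = gen M - gen N. Proof. exact: linearB. Qed.
Lemma genZ (k : C) M : gen (k *: M) = k *: gen M. Proof. exact: linearZ. Qed.

Lemma cls_Ugen (X : sl R l) : cls (Ugen X) = gen (val X).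
Proof.
rewrite genE; congr (cls (Ugen _)); apply: val_inj.
by rewrite val_sl_of traceless_id //; apply/eqP; exact: (valP X).
Qed.

Lemma lbr_subr_scalar M N (a b : C) : lbr (M - a%:M) (N - b%:M) = lbr M N.
Proof.
rewrite /lbr !mulmxBl !mulmxBr (scalar_mxC b M) (scalar_mxC a N) (scalar_mxC b a%:M).
by rewrite !opprB addrACA !subrKA.
Qed.

Lemma ad_gen M N : ad (gen M) (gen N) = gen (M *m N - N *m M).
Proof.
rewrite adE !genE -!clsM -clsB; apply/clsP/ueq_genBr.
rewrite !val_sl_of traceless_id; last by rewrite linearB /= mxtrace_mulC subrr.
exact/esym/lbr_subr_scalar.
Qed.

Local Notation E a b := (gen (delta_mx a b)).

Lemma ad_gen_delta a b c d :
  ad (E a b) (E c d) = gen (delta_mx a d *+ (b == c) - delta_mx c b *+ (d == a)).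
Proof. by rewrite ad_gen !mul_delta_mx_cond. Qed.

Lemma commutator_diag_delta (H : 'M[C]_n) a b :
  (forall i j : 'I_n, i != j -> H i j = 0) ->
  H *m delta_mx a b - delta_mx a b *m H = (H a a - H b b) *: delta_mx a b.
Proof.
move=> H_diag; have -> : H = diag_mx (\row_k H k k).
  apply/matrixP => i j; rewrite !mxE.
  by case: (eqVneq i j) => [-> | /H_diag ->]; rewrite ?mulr1n ?mulr0n.
rewrite mul_diag_mx mul_mx_diag; apply/matrixP => i j; rewrite !mxE.
case: (eqVneq i a) => [-> | _]; case: (eqVneq j b) => [-> | _] /=;
  by rewrite ?eqxx ?mulr1n ?mulr1 ?mul1r ?mulr0 ?mul0r ?subrr.
Qed.

Lemma ad_cartan_delta (H : sl R l) a b : in_cartan H ->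
  ad (cls (Ugen H)) (E a b) = (val H a a - val H b b) *: E a b.
Proof. by move=> H_cartan; rewrite cls_Ugen ad_gen commutator_diag_delta // genZ. Qed.

Definition in_submod (v : U) (q : Ug) := exists2 u, in_adj_submod v u & cls u = q.

Section Submodule.
Variable v : U.

Lemma submod_gen : in_submod v (cls v).
Proof. by exists v; first exact: sm_gen. Qed.

Lemma submodZ (k : C) (x : Ug) : in_submod v x -> in_submod v (k *: x).
Proof. by move=> [u su <-]; exists (Umul (Uscal l k) u); [exact: sm_scale | rewrite clsZ]. Qed.

Lemma submodN (x : Ug) : in_submod v x -> in_submod v (- x).
Proof. by rewrite -scaleN1r; apply: submodZ. Qed.

Lemma submod_ad M (x : Ug) : in_submod v x -> in_submod v (ad (gen M) x).
Proof.
move=> [u su <-]; exists (uad (sl_of M) u); first exact: sm_ad.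
by rewrite /uad clsB !clsM adE genE.
Qed.

End Submodule.

Definition in_Unplus_cls (q : Ug) := exists2 u, in_Unplus u & cls u = q.

Lemma Unplus_clsD (x y : Ug) : in_Unplus_cls x -> in_Unplus_cls y -> in_Unplus_cls (x + y).
Proof. by move=> [u su <-] [w sw <-]; exists (Uadd u w); [exact: un_add | rewrite clsD]. Qed.

Lemma Unplus_clsMl (x y : Ug) : in_Unplus_cls y -> in_Unplus_cls (x * y).
Proof.
elim/pquot_ind: x => x [u su <-]; exists (Umul x u); last by rewrite clsM.
elim: su => [w X X_nplus | a b _ Ia _ Ib | a b _ Ia ab].
- by apply: un_eq (ueq_sym (ueq_mulA _ _ _)); exact: un_mul.
- by apply: un_eq (ueq_sym (ueq_mulDr _ _ _)); exact: un_add.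
- by apply: un_eq Ia _; apply: ueq_mul => //; exact: ueq_refl.
Qed.

Lemma Unplus_clsB (x y : Ug) : in_Unplus_cls x -> in_Unplus_cls y -> in_Unplus_cls (x - y).
Proof. by move=> Ix Iy; apply: Unplus_clsD Ix _; rewrite -mulN1r; apply: Unplus_clsMl. Qed.

Lemma Unplus_cls_delta (x : Ug) a b : (a < b)%N -> in_Unplus_cls (x * E a b).
Proof.
move=> lt_ab; apply: Unplus_clsMl.
exists (Umul (Uscal l 1) (Ugen (sl_of (delta_mx a b)))); last by rewrite clsM mul1r genE.
apply: un_mul => i j le_ji; rewrite val_sl_of traceless_id; last first.
  by rewrite mxtrace_delta (ltn_eqF lt_ab : (a == b) = false).
rewrite mxE; case: (eqVneq i a) => [ia | //]; case: (eqVneq j b) => [jb | //].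
by move: le_ji; rewrite ia jb leqNgt lt_ab.
Qed.

Definition distinct4 a b c d :=
  [&& a != b, a != c, a != d, b != c, b != d & c != d].

Ltac distinct4_split := repeat match goal with
  | H : is_true (distinct4 _ _ _ _) |- _ => rewrite /distinct4 in H
  | H : is_true (_ && _) |- _ => case/andP: H => ? ?
  end.
Ltac distinct4_solve := distinct4_split; rewrite /distinct4;
  repeat (apply/andP; split); first [assumption | rewrite eq_sym; assumption].

Ltac neq_simpl := repeat match goal with
  | H : is_true (?x != ?y) |- context [?x == ?y] => rewrite (negbTE H)
  | H : is_true (?x != ?y) |- context [?y == ?x] => rewrite (eq_sym y x) (negbTE H)
  end.
Ltac delta_simpl := repeat progress (
  rewrite ?(genB, adB, adD, adN, adM, ad_gen_delta) ?eqxx; neq_simpl;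
  rewrite ?(mulr0n, mulr1n, gen0, genN, ad0, subr0, sub0r, mulr0, mul0r, addr0, add0r,
            mulNr, mulrN)).

Definition minor a b c d := E a c * E b d - E a d * E b c.

Lemma ad_delta_minor a b c d p : p != a -> c != p -> a != b -> d != p ->
  ad (E p a) (minor a b c d) = minor p b c d.
Proof. by move=> *; rewrite /minor; delta_simpl. Qed.

Lemma ad_delta_delta_minor a b c d : distinct4 a b c d ->
  ad (E d a) (ad (E d a) (minor a b c d)) = - (minor d b c a *+ 2).
Proof.
move=> abcd; distinct4_split; rewrite /minor; delta_simpl.
by rewrite mulrBl mulNr -!opprD -!mulr2n mulrnBl.
Qed.

Lemma ad_ad_minor a b c d : distinct4 a b c d ->
  ad (E c a) (ad (E d b) (minor a b c d)) =
  (E c c - E a a) * (E d d - E b b) +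
  ((E c b * E b c - E a b * E b a) - (E c d * E d c - E a d * E d a)).
Proof.
move=> abcd; distinct4_split; rewrite /minor; delta_simpl.
by rewrite opprD (opprD (- _)) !opprK.
Qed.

Section MinorOrbit.
Variable v : U.

Definition submod_minor a b c d := in_submod v (minor a b c d).

Lemma submod_minor_swap12 a b c d :
  distinct4 a b c d -> submod_minor a b c d -> submod_minor b a c d.
Proof.
move=> abcd; distinct4_split; rewrite /submod_minor.
have -> : minor b a c d = - minor a b c d.
  rewrite /minor (@ad_eq0 _ _ (E a d) (E b c)); last by delta_simpl.
  by rewrite (@ad_eq0 _ _ (E a c) (E b d)) ?opprB //; delta_simpl.
exact: submodN.
Qed.

Lemma submod_minor_swap34 a b c d : submod_minor a b c d -> submod_minor a b d c.
Proof. by rewrite /submod_minor -[minor a b d c]opprB; apply: submodN. Qed.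

Lemma submod_minor_swap14 a b c d :
  distinct4 a b c d -> submod_minor a b c d -> submod_minor d b c a.
Proof.
rewrite /submod_minor => abcd Rabcd.
have -> : minor d b c a = (- 2^-1) *: ad (E d a) (ad (E d a) (minor a b c d)).
  rewrite ad_delta_delta_minor // -(scaler_nat 2 (minor _ _ _ _)) scalerN scaleNr.
  by rewrite opprK scalerA mulVf ?scale1r // pnatr_eq0.
by apply: submodZ; do 2!apply: submod_ad.
Qed.

Lemma submod_minor_replace1 a b c d p : distinct4 a b c d ->
  p != a -> p != b -> p != c -> p != d -> submod_minor a b c d -> submod_minor p b c d.
Proof.
move=> abcd pa pb pc pd; distinct4_split.
by rewrite /submod_minor -(@ad_delta_minor a b c d p) 1?[_ == p]eq_sym //; apply: submod_ad.
Qed.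

Lemma submod_minor_swap13 a b c d :
  distinct4 a b c d -> submod_minor a b c d -> submod_minor c b a d.
Proof.
move=> abcd Rabcd; apply: submod_minor_swap34.
by apply: (@submod_minor_swap14 a b d c); [distinct4_solve | exact: submod_minor_swap34].
Qed.

Lemma submod_minor_swap23 a b c d :
  distinct4 a b c d -> submod_minor a b c d -> submod_minor a c b d.
Proof.
move=> abcd Rabcd; apply: (@submod_minor_swap12 c a b d); first by distinct4_solve.
by apply: (@submod_minor_swap13 b a c d); [distinct4_solve | exact: submod_minor_swap12].
Qed.

Lemma submod_minor_swap24 a b c d :
  distinct4 a b c d -> submod_minor a b c d -> submod_minor a d c b.
Proof.
move=> abcd Rabcd; apply: (@submod_minor_swap12 d a c b); first by distinct4_solve.
by apply: (@submod_minor_swap14 b a c d); [distinct4_solve | exact: submod_minor_swap12].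
Qed.

Lemma submod_minor_replace2 a b c d p : distinct4 a b c d ->
  p != a -> p != b -> p != c -> p != d -> submod_minor a b c d -> submod_minor a p c d.
Proof.
move=> abcd *; apply: (@submod_minor_swap12 p a c d); first by distinct4_solve.
by apply: (@submod_minor_replace1 b a c d) => //; [distinct4_solve | exact: submod_minor_swap12].
Qed.

Lemma submod_minor_replace3 a b c d p : distinct4 a b c d ->
  p != a -> p != b -> p != c -> p != d -> submod_minor a b c d -> submod_minor a b p d.
Proof.
move=> abcd *; apply: (@submod_minor_swap13 p b a d); first by distinct4_solve.
by apply: (@submod_minor_replace1 c b a d) => //; [distinct4_solve | exact: submod_minor_swap13].
Qed.

Lemma submod_minor_replace4 a b c d p : distinct4 a b c d ->
  p != a -> p != b -> p != c -> p != d -> submod_minor a b c d -> submod_minor a b c p.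
Proof.
move=> abcd *; apply: (@submod_minor_swap14 p b c a); first by distinct4_solve.
by apply: (@submod_minor_replace1 d b c a) => //; [distinct4_solve | exact: submod_minor_swap14].
Qed.

Lemma submod_minor_fix1 s1 s2 s3 s4 t :
  distinct4 s1 s2 s3 s4 -> submod_minor s1 s2 s3 s4 ->
  exists w2 w3 w4, distinct4 t w2 w3 w4 /\ submod_minor t w2 w3 w4.
Proof.
move=> s_uniq Rs.
have [->|t1] := eqVneq t s1; first by exists s2, s3, s4.
have [->|t2] := eqVneq t s2.
  by exists s1, s3, s4; split; [distinct4_solve | exact: submod_minor_swap12].
have [->|t3] := eqVneq t s3.
  by exists s2, s1, s4; split; [distinct4_solve | exact: submod_minor_swap13].
have [->|t4] := eqVneq t s4.
  by exists s2, s3, s1; split; [distinct4_solve | exact: submod_minor_swap14].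
by exists s2, s3, s4; split; [distinct4_solve | exact: (@submod_minor_replace1 s1)].
Qed.

Lemma submod_minor_fix2 t1 s2 s3 s4 t :
  distinct4 t1 s2 s3 s4 -> t != t1 -> submod_minor t1 s2 s3 s4 ->
  exists w3 w4, distinct4 t1 t w3 w4 /\ submod_minor t1 t w3 w4.
Proof.
move=> s_uniq tt1 Rs.
have [->|t2] := eqVneq t s2; first by exists s3, s4.
have [->|t3] := eqVneq t s3.
  by exists s2, s4; split; [distinct4_solve | exact: submod_minor_swap23].
have [->|t4] := eqVneq t s4.
  by exists s3, s2; split; [distinct4_solve | exact: submod_minor_swap24].
by exists s3, s4; split; [distinct4_solve | exact: (@submod_minor_replace2 t1 s2)].
Qed.

Lemma submod_minor_fix3 t1 t2 s3 s4 t :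
  distinct4 t1 t2 s3 s4 -> t != t1 -> t != t2 -> submod_minor t1 t2 s3 s4 ->
  exists w4, distinct4 t1 t2 t w4 /\ submod_minor t1 t2 t w4.
Proof.
move=> s_uniq tt1 tt2 Rs.
have [->|t3] := eqVneq t s3; first by exists s4.
have [->|t4] := eqVneq t s4.
  by exists s3; split; [distinct4_solve | exact: submod_minor_swap34].
by exists s4; split; [distinct4_solve | exact: (@submod_minor_replace3 t1 t2 s3)].
Qed.

Lemma submod_minor_fix4 t1 t2 t3 s4 t : distinct4 t1 t2 t3 s4 -> distinct4 t1 t2 t3 t ->
  submod_minor t1 t2 t3 s4 -> submod_minor t1 t2 t3 t.
Proof.
move=> s_uniq t_uniq Rs; have [->|t4] := eqVneq t s4; first by [].
by distinct4_split; apply: (@submod_minor_replace4 t1 t2 t3 s4) => //; distinct4_solve.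
Qed.

Lemma submod_minor_transfer s1 s2 s3 s4 t1 t2 t3 t4 :
  distinct4 s1 s2 s3 s4 -> distinct4 t1 t2 t3 t4 ->
  submod_minor s1 s2 s3 s4 -> submod_minor t1 t2 t3 t4.
Proof.
move=> s_uniq t_uniq Rs.
have [w2 [w3 [w4 [w_uniq Rw]]]] := submod_minor_fix1 t1 s_uniq Rs.
have [t21 t31 t32] : [/\ t2 != t1, t3 != t1 & t3 != t2].
  by distinct4_split; split; rewrite eq_sym.
have [x3 [x4 [x_uniq Rx]]] := submod_minor_fix2 w_uniq t21 Rw.
have [y4 [y_uniq Ry]] := submod_minor_fix3 x_uniq t31 t32 Rx.
exact: submod_minor_fix4 y_uniq t_uniq Ry.
Qed.

End MinorOrbit.

Lemma ad_cartan_minor (H : sl R l) a b c d : in_cartan H ->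
  ad (cls (Ugen H)) (minor a b c d) =
  (val H a a - val H c c + (val H b b - val H d d)) *: minor a b c d.
Proof.
move=> H_cartan; rewrite adB scalerBr.
rewrite !(ad_eigenM (ad_cartan_delta _ _ H_cartan) (ad_cartan_delta _ _ H_cartan)).
by congr (_ *: _ - _ *: _); ring.
Qed.

Lemma ad_cartan_ad_ad_minor (H : sl R l) a b c d : in_cartan H ->
  ad (cls (Ugen H)) (ad (E c a) (ad (E d b) (minor a b c d))) = 0.
Proof.
move=> H_cartan; have Hm := ad_cartan_minor a b c d H_cartan.
rewrite (ad_eigen_ad (ad_cartan_delta _ _ H_cartan)
  (ad_eigen_ad (ad_cartan_delta _ _ H_cartan) Hm)).
by rewrite [X in X *: _](_ : _ = 0) ?scale0r //; ring.
Qed.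

Lemma ad_delta_diag a c : ad (E a a) (E c c) = 0.
Proof.
by rewrite ad_gen_delta; have [->|_] := eqVneq a c; rewrite ?mulr0n subrr gen0.
Qed.

Lemma commr_diag_delta a b c d : GRing.comm (E a a - E b b) (E c c - E d d).
Proof. by apply: ad_eq0; rewrite adBl !adB !ad_delta_diag !subrr. Qed.

Lemma mul_delta_swap a b : E a b * E b a = E b a * E a b + (E a a - E b b).
Proof.
have := ad_gen_delta a b b a; rewrite !eqxx !mulr1n adE genB => <-.
by rewrite addrC subrK.
Qed.

Lemma in_P0_intro (p : U) (z : Ug) : in_submod (v_l1 R l) z ->
  (forall H, in_cartan H -> ad (cls (Ugen H)) z = 0) ->
  in_Unplus_cls (z - cls p) -> in_P0 p.
Proof.
move=> [u Ru <-] z_wt0 [w Iw wE]; exists u; split => // [H H_cartan|].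
  by apply/clsP; rewrite /uad clsB !clsM cls0 -(z_wt0 H H_cartan) adE.
by apply: un_eq Iw _; apply/clsP; rewrite wE clsB.
Qed.

Local Notation idx k := (@inord l k.-1).

Lemma idx_val k : (1 <= k <= n)%N -> idx k = k.-1 :> nat.
Proof. by move=> k_range; rewrite inordK //; lia. Qed.

Lemma idx_neq i j : (1 <= i <= n)%N -> (1 <= j <= n)%N -> i != j -> idx i != idx j.
Proof.
move=> i_range j_range /eqP ij; apply/eqP => /(congr1 (@nat_of_ord n)).
by rewrite !idx_val //; lia.
Qed.

Lemma idx_ltn i j : (1 <= i <= n)%N -> (1 <= j <= n)%N -> (i < j)%N -> (idx i < idx j)%N.
Proof. by move=> i_range j_range ij; rewrite !idx_val //; lia. Qed.

Lemma cls_uh i : cls (uh R l i) = E (idx i) (idx i) - E (idx i.+1) (idx i.+1).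
Proof.
rewrite /uh cls_Ugen /h_cartan insubdK ?genB //.
by rewrite unfold_in /Emx linearB /= !mxtrace_delta !eqxx subrr.
Qed.

Lemma cls_ue i j : (1 <= i <= n)%N -> (1 <= j <= n)%N -> i != j ->
  cls (ue R l i j) = (-1) ^+ (j - i - 1) *: E (idx i) (idx j).
Proof.
move=> i_range j_range ij; rewrite /ue cls_Ugen /e_root insubdK ?genZ //.
by rewrite unfold_in linearZ /= mxtrace_delta (negbTE (idx_neq i_range j_range ij)) mulr0.
Qed.

Lemma cls_v_l1 : (3 <= l)%N -> cls (v_l1 R l) = minor (idx 1) (idx 2) (idx n) (idx l).
Proof.
move=> l_ge3; have n1 : idx n != idx 1 by apply: idx_neq; lia.
have l2 : idx l != idx 2 by apply: idx_neq; lia.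
rewrite /v_l1 clsB !clsM !cls_ue; try lia.
rewrite -!scalerAl -!scalerAr !scalerA -!exprD.
have -> : (n - 1 - 1 + (l - 2 - 1) = (l - 2).*2)%N by lia.
have -> : (n - 2 - 1 + (l - 1 - 1) = (l - 2).*2)%N by lia.
rewrite -signr_odd odd_double expr0 !scale1r /minor.
by congr (_ - _); apply: ad_eq0; delta_simpl.
Qed.

Lemma in_P0_minor (p : U) a b c d : (3 <= l)%N -> distinct4 a b c d ->
  in_Unplus_cls (ad (E c a) (ad (E d b) (minor a b c d)) - cls p) -> in_P0 p.
Proof.
move=> l_ge3 abcd; apply: in_P0_intro; last by move=> H; apply: ad_cartan_ad_ad_minor.
do 2!apply: submod_ad.
apply: (@submod_minor_transfer _ (idx 1) (idx 2) (idx n) (idx l)) => //.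
  by rewrite /distinct4 !idx_neq //; lia.
by rewrite /submod_minor -cls_v_l1 //; apply: submod_gen.
Qed.

Lemma in_P0_p_ij i j : (3 <= l)%N -> (1 <= i <= l - 2)%N -> (i + 2 <= j <= l)%N ->
  in_P0 (p_ij R l i j).
Proof.
move=> l_ge3 i_range j_range.
set a := idx j.+1; set b := idx i.+1; set c := idx j; set d := idx i.
have abcd : distinct4 a b c d by rewrite /distinct4 !idx_neq //; lia.
apply: (in_P0_minor l_ge3 abcd).
rewrite ad_ad_minor // /p_ij clsM !cls_uh -/a -/b -/c -/d commr_diag_delta addrAC subrr add0r.
by apply: Unplus_clsB; apply: Unplus_clsB; apply: Unplus_cls_delta; rewrite idx_ltn //; lia.
Qed.

Lemma in_P0_q_i i : (3 <= l)%N -> (2 <= i <= l - 1)%N -> in_P0 (q_i R l i).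
Proof.
move=> l_ge3 i_range.
set a := idx i.+2; set b := idx i.+1; set c := idx i.-1; set d := idx i.
have abcd : distinct4 a b c d by rewrite /distinct4 !idx_neq //; lia.
apply: (in_P0_minor l_ge3 abcd).
have q_iE : cls (q_i R l i) =
    (E c c - E a a) * (E d d - E b b) + ((E c c - E b b) - (E c c - E d d)).
  rewrite /q_i clsM !clsD !cls_uh cls1 prednK; last by lia.
  rewrite -/a -/b -/c -/d !subrKA mulrDr mulr1 commr_diag_delta.
  by rewrite opprB (addrC (E c c - E b b)) subrKA.
rewrite ad_ad_minor // (mul_delta_swap c b) (mul_delta_swap c d) q_iE.
rewrite (addrAC (E b c * E c b)) (addrAC (E d c * E c d)) opprD addrACA.
rewrite (addrCA ((E c c - E a a) * _)) addrK.
by apply: Unplus_clsB; apply: Unplus_clsB; apply: Unplus_cls_delta; rewrite idx_ltn //; lia.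
Qed.

End EnvelopingAlgebra.

Unset Implicit Arguments.
Local Close Scope ring_scope.

Theorem lemma5p3 (R : realType) (l : nat) (hl : (3 <= l)%N) :
  (forall i j : nat, (1 <= i <= l - 2)%N -> (i + 2 <= j <= l)%N ->
     in_P0 (p_ij R l i j)) /\
  (forall i : nat, (2 <= i <= l - 1)%N -> in_P0 (q_i R l i)).
Proof.
split=> [i j | i]; [exact: in_P0_p_ij | exact: in_P0_q_i].
Qed.
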